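(* Let $\kappa$ be a cardinal, $W_1,W_2\subseteq C^\omega$ objectives, and $(U_1,\le_1)$, $(U_2,\le_2)$ partially ordered $C$-graphs which are $(\kappa,W_1)$-universal and $(\kappa,W_2)$-universal respectively. Then their direct product $U$ is $(\kappa,W_1\cap W_2)$-universal.
   Context: A $C$-graph: vertex set $V(G)$, edges $E(G)\subseteq V(G)\times C\times V(G)$ written $v\xrightarrow{c}v'$, every vertex having an outgoing edge; a $C$-tree is a $C$-graph with root $t_0$ such that every vertex has a unique path from $t_0$. A morphism maps vertices so edges go to edges of the same colour. A vertex satisfies an objective $W$ if every infinite path from it has colour sequence in $W$. $G$ is $(\kappa,W)$-universal if every $C$-tree $T$ of cardinality $<\kappa$ with root $t_0$ admits a morphism $\phi:T\to G$ such that $\phi(t_0)$ satisfies $W$ in $G$ whenever $t_0$ satisfies $W$ in $T$. The direct product of $(U_1,\le_1)$ and $(U_2,\le_2)$ is the $C$-graph on $V(U_1)\times V(U_2)$ ordered coordinatewise, with an edge $(v_1,v_2)\xrightarrow{c}(v_1',v_2')$ iff $v_1\xrightarrow{c}v_1'\in E(U_1)$ and $v_2\xrightarrow{c}v_2'\in E(U_2)$. *)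

From Stdlib Require Import List.
Import ListNotations.
Set Implicit Arguments.

(* A C-graph: a vertex type and a C-coloured edge relation.
   Totality (every vertex has an outgoing edge) is a separate predicate (the direct product need not be total). *)
Record cgraph (C : Type) := CGraph {
  vert : Type;
  edge : vert -> C -> vert -> Prop }.
Arguments vert {C} _.
Arguments edge {C} _ _ _ _.

Definition total {C} (G : cgraph C) : Prop :=
  forall v : vert G, exists (c : C) (v' : vert G), edge G v c v'.

Fixpoint fpath {C} (G : cgraph C) (u : vert G) (l : list (C * vert G)) (v : vert G) : Prop :=
  match l with
  | [] => u = v
  | (c, w) :: l' => edge G u c w /\ fpath G w l' v
  end.

Record ctree (C : Type) := CTree {
  tgraph : cgraph C;
  troot : vert tgraph;
  ttotal : total tgraph;
  tunique : forall v : vert tgraph, exists! l, fpath tgraph troot l v }.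
Arguments tgraph {C} _.
Arguments troot {C} _.

Definition objective (C : Type) := (nat -> C) -> Prop.

Definition ipath {C} (G : cgraph C) (v : vert G) (p : nat -> vert G) (w : nat -> C) : Prop :=
  p 0 = v /\ forall n, edge G (p n) (w n) (p (S n)).

Definition satisfies {C} (G : cgraph C) (W : objective C) (v : vert G) : Prop :=
  forall p w, ipath G v p w -> W w.

Definition is_morphism {C} (G H : cgraph C) (phi : vert G -> vert H) : Prop :=
  forall t c t', edge G t c t' -> edge H (phi t) c (phi t').

Definition card_lt (A K : Type) : Prop :=
  (exists f : A -> K, forall x y, f x = f y -> x = y) /\
  ~ (exists g : K -> A, forall x y, g x = g y -> x = y).

(* (kappa, W)-universality, the cardinal kappa given as (the cardinality of) a type K *)
Definition universal {C} (K : Type) (W : objective C) (G : cgraph C) : Prop :=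
  forall T : ctree C, card_lt (vert (tgraph T)) K ->
    exists phi : vert (tgraph T) -> vert G,
      is_morphism (tgraph T) G phi /\
      (satisfies (tgraph T) W (troot T) -> satisfies G W (phi (troot T))).

Definition objI {C} (W1 W2 : objective C) : objective C := fun w => W1 w /\ W2 w.

Definition is_porder {A} (le : A -> A -> Prop) : Prop :=
  (forall x, le x x) /\ (forall x y, le x y -> le y x -> x = y) /\
  (forall x y z, le x y -> le y z -> le x z).

Definition prod_graph {C} (G1 G2 : cgraph C) : cgraph C :=
  @CGraph C (vert G1 * vert G2)
    (fun v c v' => edge G1 (fst v) c (fst v') /\ edge G2 (snd v) c (snd v')).

Definition prod_le {A B} (le1 : A -> A -> Prop) (le2 : B -> B -> Prop) (x y : A * B) : Prop :=
  le1 (fst x) (fst y) /\ le2 (snd x) (snd y).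

(* Embed a tree into both factors and pair the two morphisms.  An infinite
   path in the product projects to infinite paths in both factors with the
   same colour sequence, so the paired root satisfies W1 /\ W2 as soon as the
   two images of the root satisfy W1 and W2 respectively. *)


Section ProductGraph.

Variables (C : Type) (G1 G2 : cgraph C).

Lemma is_morphism_pair {H : cgraph C} {f1 : vert H -> vert G1} {f2 : vert H -> vert G2} :
  is_morphism H G1 f1 -> is_morphism H G2 f2 ->
  is_morphism H (prod_graph G1 G2) (fun t => (f1 t, f2 t)).
Proof. intros m1 m2 t c t' e; split; [apply m1 | apply m2]; exact e. Qed.

Lemma ipath_fst {v : vert (prod_graph G1 G2)} {p w} :
  ipath (prod_graph G1 G2) v p w -> ipath G1 (fst v) (fun n => fst (p n)) w.
Proof. intros [p0 Hp]; split; [now rewrite p0 | intro n; apply (Hp n)]. Qed.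

Lemma ipath_snd {v : vert (prod_graph G1 G2)} {p w} :
  ipath (prod_graph G1 G2) v p w -> ipath G2 (snd v) (fun n => snd (p n)) w.
Proof. intros [p0 Hp]; split; [now rewrite p0 | intro n; apply (Hp n)]. Qed.

Lemma satisfies_prod (W1 W2 : objective C) (v : vert (prod_graph G1 G2)) :
  satisfies G1 W1 (fst v) -> satisfies G2 W2 (snd v) ->
  satisfies (prod_graph G1 G2) (objI W1 W2) v.
Proof.
  intros s1 s2 p w Hp; split.
  - exact (s1 _ _ (ipath_fst Hp)).
  - exact (s2 _ _ (ipath_snd Hp)).
Qed.

End ProductGraph.

Lemma satisfies_mono C (G : cgraph C) (W W' : objective C) v :
  (forall w, W w -> W' w) -> satisfies G W v -> satisfies G W' v.
Proof. intros HW s p w Hp; exact (HW _ (s p w Hp)). Qed.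

Theorem lemma6p6 (C : Type) (K : Type) (W1 W2 : objective C)
  (U1 U2 : cgraph C)
  (le1 : vert U1 -> vert U1 -> Prop) (le2 : vert U2 -> vert U2 -> Prop)
  (tot1 : total U1) (tot2 : total U2)
  (po1 : is_porder le1) (po2 : is_porder le2)
  (H1 : universal K W1 U1) (H2 : universal K W2 U2) :
  universal K (objI W1 W2) (prod_graph U1 U2).
Proof.
  intros T HT.
  destruct (H1 T HT) as [f1 [m1 s1]], (H2 T HT) as [f2 [m2 s2]].
  exists (fun t => (f1 t, f2 t)); split.
  - now apply is_morphism_pair.
  - intros S; apply satisfies_prod.
    + apply s1; revert S; apply satisfies_mono; now intros w [].
    + apply s2; revert S; apply satisfies_mono; now intros w [].
Qed.
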